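(* For any connected graphs $G$ and $H$, $$G_{SR}\boxtimes H_{SR}\sqsubseteq (G\boxtimes H)_{SR}\sqsubseteq G_{SR}\oplus H_{SR}.$$
   Context: All graphs are simple; $d_G$ is the shortest-path distance. A vertex $u$ is maximally distant from $v$ in $G$ if for every neighbor $w$ of $u$, $d_G(v,w)\le d_G(u,v)$; $u,v$ are mutually maximally distant if each is maximally distant from the other. The strong resolving graph $G_{SR}$ of $G$ has vertex set $V(G)$, with $u,v$ adjacent iff $u$ and $v$ are mutually maximally distant in $G$. The strong product $G\boxtimes H$ has vertex set $V(G)\times V(H)$, with $(a,b)\sim(c,d)$ iff ($a=c$ and $bd\in E(H)$) or ($ac\in E(G)$ and $b=d$) or ($ac\in E(G)$ and $bd\in E(H)$). The Cartesian sum $G\oplus H$ has vertex set $V(G)\times V(H)$, with $(a,b)\sim(c,d)$ iff $ac\in E(G)$ or $bd\in E(H)$. For graphs $G'=(V',E')$ and $G=(V,E)$, $G'\sqsubseteq G$ means $V'\subseteq V$ and $E'\subseteq E$. *)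

From mathcomp Require Import all_boot.
Set Implicit Arguments. Unset Strict Implicit. Unset Printing Implicit Defensive.

Section Graphs.
Variable T : finType.

Definition simple_graph (e : rel T) : Prop := irreflexive e /\ symmetric e.
Definition connected_graph (e : rel T) : Prop := forall u v : T, connect e u v.

Definition walkn (e : rel T) (u v : T) (n : nat) : bool :=
  [exists p : n.-tuple T, path e u p && (last u p == v)].

Lemma connect_walkn (e : rel T) (u v : T) : connect e u v -> exists n, walkn e u v n.
Proof.
move/connectP=> [p pp lp]; exists (size p); apply/existsP.
exists (in_tuple p); by rewrite /= pp -lp eqxx.
Qed.

(* shortest-path distance d_G(u,v) (meaningful when u,v are connected; 0 otherwise) *)
Definition dist (e : rel T) (u v : T) : nat :=
  match @idP (connect e u v) with
  | ReflectT h => ex_minn (connect_walkn h)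
  | ReflectF _ => 0
  end.

Definition max_dist (e : rel T) (u v : T) : bool :=
  [forall w, e u w ==> (dist e v w <= dist e u v)].

Definition strong_resolving (e : rel T) : rel T :=
  fun u v => (u != v) && max_dist e u v && max_dist e v u.
End Graphs.

Definition strong_prod (T1 T2 : finType) (e1 : rel T1) (e2 : rel T2) : rel (T1 * T2) :=
  fun x y => [|| (x.1 == y.1) && e2 x.2 y.2,
                 e1 x.1 y.1 && (x.2 == y.2)
               | e1 x.1 y.1 && e2 x.2 y.2].

Definition cart_sum (T1 T2 : finType) (e1 : rel T1) (e2 : rel T2) : rel (T1 * T2) :=
  fun x y => e1 x.1 y.1 || e2 x.2 y.2.

Definition subgraph (T : finType) (e' e : rel T) : Prop := forall x y, e' x y -> e x y.

(* In the strong product, distance is the maximum of the coordinate distances,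
   and a neighbour of (a, b) is a pair of closed neighbours of a and of b.
   If x ~ y in G_SR ⊠ H_SR, every coordinate pair is equal or mutually
   maximally distant, so moving x to a neighbour raises no coordinate distance
   beyond max(d(x_i, y_i), 1) <= d(x, y): x and y are mutually maximally
   distant.  Conversely, if x and y are mutually maximally distant in G ⊠ H,
   moving only the coordinate realising the maximum shows that this coordinate
   pair is mutually maximally distant in its factor. *)
From mathcomp Require Import all_boot.
From mathcomp Require Import zify.
Set Implicit Arguments. Unset Strict Implicit.

Definition closed_nbr (T : finType) (e : rel T) (u w : T) : bool :=
  (w == u) || e u w.

Section Distance.
Variables (T : finType) (e : rel T).

Lemma walkn0 u v : walkn e u v 0 = (u == v).
Proof.
apply/existsP/eqP; first by case=> p; rewrite (tuple0 p) /= => /eqP.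
by move=> <-; exists [tuple]; rewrite /= eqxx.
Qed.

Lemma walknS u v n : walkn e u v n.+1 = [exists w, e u w && walkn e w v n].
Proof.
apply/existsP/existsP.
  case=> p; case/tupleP: p => w p /= /andP[/andP[euw pp] lp].
  by exists w; rewrite euw; apply/existsP; exists p; rewrite pp.
case=> w /andP[euw /existsP[p /andP[pp lp]]].
by exists [tuple of w :: p]; rewrite /= euw pp.
Qed.

Lemma walkn_rcons u w v n : walkn e u w n -> e w v -> walkn e u v n.+1.
Proof.
case/existsP=> p /andP[pp /eqP lp] ewv; apply/existsP.
by exists (Tuple (rcons_tupleP p v)); rewrite /= rcons_path pp last_rcons lp ewv eqxx.
Qed.

Lemma walkn_connect u v n : walkn e u v n -> connect e u v.
Proof. by case/existsP=> p /andP[pp /eqP lp]; apply/connectP; exists (val p). Qed.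

Lemma dist_walkn u v : connect e u v -> walkn e u v (dist e u v).
Proof. by rewrite /dist; destruct (@idP (connect e u v)) => // _; case: ex_minnP. Qed.

Lemma dist_le_walkn u v n : walkn e u v n -> dist e u v <= n.
Proof.
move=> w; rewrite /dist; destruct (@idP (connect e u v)); last by move/walkn_connect: w.
by case: ex_minnP => m _ /(_ _ w).
Qed.

Lemma distxx u : dist e u u = 0.
Proof. by apply/eqP; rewrite -leqn0 dist_le_walkn // walkn0. Qed.

Lemma dist_eq0 u v : connect e u v -> (dist e u v == 0) = (u == v).
Proof.
move=> c; apply/eqP/eqP => [d0|<-]; last exact: distxx.
by move: (dist_walkn c); rewrite d0 walkn0 => /eqP.
Qed.

Hypothesis e_sym : symmetric e.
Hypothesis e_conn : connected_graph e.

Lemma dist_gt0 u v : (0 < dist e u v) = (u != v).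
Proof. by rewrite lt0n dist_eq0. Qed.

Lemma closed_nbr_sym u w : closed_nbr e u w = closed_nbr e w u.
Proof. by rewrite /closed_nbr eq_sym e_sym. Qed.

Lemma walkn_sym n u v : walkn e u v n -> walkn e v u n.
Proof.
elim: n u v => [|n IH] u v; first by rewrite !walkn0 eq_sym.
rewrite walknS => /existsP[w /andP[euw wv]].
by apply: walkn_rcons (IH _ _ wv) _; rewrite e_sym.
Qed.

Lemma distC u v : dist e u v = dist e v u.
Proof. by apply/eqP; rewrite eqn_leq !dist_le_walkn // walkn_sym // dist_walkn. Qed.

Lemma dist_closed_nbr u w v : closed_nbr e u w -> dist e u v <= (dist e w v).+1.
Proof.
case/orP=> [/eqP-> //|euw]; apply: dist_le_walkn; rewrite walknS.
by apply/existsP; exists w; rewrite euw dist_walkn.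
Qed.

(* Stay at [a] if it is already within [n] of [c], else step along a geodesic;
   this lets both coordinates of a strong-product walk advance in lockstep. *)
Lemma closed_nbr_toward a c n : dist e a c <= n.+1 ->
  exists2 a', closed_nbr e a a' & dist e a' c = minn (dist e a c) n.
Proof.
move=> le_ac; case: (leqP (dist e a c) n) => [le_n|lt_n].
  by exists a; rewrite /closed_nbr ?eqxx //; lia.
have d_ac : dist e a c = n.+1 by lia.
move: (dist_walkn (e_conn a c)); rewrite d_ac walknS => /existsP[w /andP[aw wc]].
have aw' : closed_nbr e a w by rewrite /closed_nbr aw orbT.
have := dist_le_walkn wc; have := dist_closed_nbr c aw'.
by exists w => //; lia.
Qed.

Lemma strong_resolving_sym : symmetric (strong_resolving e).
Proof. by move=> u v; rewrite /strong_resolving eq_sym andbAC. Qed.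

Lemma strong_resolving_irr : irreflexive (strong_resolving e).
Proof. by move=> u; rewrite /strong_resolving eqxx. Qed.

Lemma dist_sr_closed_nbr u v w : closed_nbr (strong_resolving e) u v ->
  closed_nbr e u w -> dist e w v <= maxn (dist e u v) 1.
Proof.
case/orP=> [/eqP-> uw|/andP[/andP[_ /forallP max_uv] _] /orP[/eqP-> | uw]].
- by have := @dist_closed_nbr w u u; rewrite -closed_nbr_sym distxx => /(_ uw); lia.
- by rewrite leq_max leqnn.
- by have := implyP (max_uv w) uw; rewrite (distC w); lia.
Qed.
End Distance.

Section StrongProduct.
Variables (T1 T2 : finType) (e1 : rel T1) (e2 : rel T2).
Local Notation p := (strong_prod e1 e2).

Lemma strong_prod_sym : symmetric e1 -> symmetric e2 -> symmetric p.
Proof.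
by move=> s1 s2 x y; rewrite /strong_prod (s1 x.1) (s2 x.2) (eq_sym x.1) (eq_sym x.2).
Qed.

Lemma strong_prod_irr : irreflexive e1 -> irreflexive e2 -> irreflexive p.
Proof. by move=> i1 i2 x; rewrite /strong_prod i1 i2 !andbF. Qed.

Lemma strong_prod_neq x y : irreflexive e1 -> irreflexive e2 -> p x y -> x != y.
Proof. by move=> i1 i2; apply: contraTneq => ->; rewrite strong_prod_irr. Qed.

Lemma strong_prod_closed_nbr x w : p x w ->
  closed_nbr e1 x.1 w.1 && closed_nbr e2 x.2 w.2.
Proof.
by rewrite /closed_nbr => /or3P[/andP[/eqP-> ->]|/andP[-> /eqP->]|/andP[-> ->]];
  rewrite ?eqxx ?orbT.
Qed.

Lemma closed_nbr_strong_prod x w : x != w ->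
  closed_nbr e1 x.1 w.1 -> closed_nbr e2 x.2 w.2 -> p x w.
Proof.
rewrite /closed_nbr; case: x w => [a b] [c d] /= neq /orP[/eqP ca|h1] /orP[/eqP db|h2];
  by move: neq; rewrite /strong_prod /= ?ca ?db ?eqxx ?h1 ?h2 ?orbT.
Qed.

End StrongProduct.

Section StrongProductDistance.
Variables (T1 T2 : finType) (e1 : rel T1) (e2 : rel T2).
Hypotheses (s1 : symmetric e1) (c1 : connected_graph e1).
Hypotheses (s2 : symmetric e2) (c2 : connected_graph e2).
Local Notation p := (strong_prod e1 e2).

Lemma walkn_strong_prod n a b c d :
  maxn (dist e1 a c) (dist e2 b d) = n -> walkn p (a, b) (c, d) n.
Proof.
elim: n a b => [|n IH] a b d_n.
  have : dist e1 a c == 0 by lia.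
  have : dist e2 b d == 0 by lia.
  by rewrite !dist_eq0 // walkn0 => /eqP-> /eqP->.
have [a' aa' d_a'] := @closed_nbr_toward _ _ c1 a c n ltac:(lia).
have [b' bb' d_b'] := @closed_nbr_toward _ _ c2 b d n ltac:(lia).
rewrite walknS; apply/existsP; exists (a', b').
rewrite IH ?d_a' ?d_b' ?andbT; last by lia.
apply: closed_nbr_strong_prod => //; rewrite xpair_eqE; apply/nandP.
have [a_a'|] := eqVneq a a'; last by left.
by right; apply/eqP => b_b'; rewrite -a_a' -b_b' in d_a' d_b'; lia.
Qed.

Lemma dist_proj_le_walkn n x y : walkn p x y n ->
  dist e1 x.1 y.1 <= n /\ dist e2 x.2 y.2 <= n.
Proof.
elim: n x y => [|n IH] x y; first by rewrite walkn0 => /eqP->; rewrite !distxx.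
rewrite walknS => /existsP[w /andP[/strong_prod_closed_nbr/andP[xw1 xw2] wy]].
have [le1 le2] := IH _ _ wy.
by have := dist_closed_nbr c1 y.1 xw1; have := dist_closed_nbr c2 y.2 xw2; lia.
Qed.

Lemma dist_strong_prod x y :
  dist p x y = maxn (dist e1 x.1 y.1) (dist e2 x.2 y.2).
Proof.
case: x y => [a b] [c d]; have W := @walkn_strong_prod _ a b c d (erefl _).
apply/eqP; rewrite eqn_leq dist_le_walkn //=.
have [le1 le2] := dist_proj_le_walkn (dist_walkn (walkn_connect W)).
by rewrite geq_max le1 le2.
Qed.

Lemma maxn_dist_gt0 x y :
  (0 < maxn (dist e1 x.1 y.1) (dist e2 x.2 y.2)) = (x != y).
Proof.
by case: x y => [a b] [c d]; rewrite leq_max !dist_gt0 // xpair_eqE negb_and.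
Qed.

Lemma max_dist_sr_strong_prod x y :
  strong_prod (strong_resolving e1) (strong_resolving e2) x y -> max_dist p x y.
Proof.
move=> xy; have x_neq_y : x != y.
  by apply: strong_prod_neq xy; apply: strong_resolving_irr.
have /andP[xy1 xy2] := strong_prod_closed_nbr xy.
apply/forallP => w; apply/implyP => /strong_prod_closed_nbr/andP[xw1 xw2].
have := dist_sr_closed_nbr s1 c1 xy1 xw1; have := dist_sr_closed_nbr s2 c2 xy2 xw2.
have := maxn_dist_gt0 x y; rewrite x_neq_y !dist_strong_prod.
by rewrite (distC s1 c1 y.1) (distC s2 c2 y.2); lia.
Qed.

Lemma max_dist_strong_prod_l x y : max_dist p x y ->
  dist e2 x.2 y.2 <= dist e1 x.1 y.1 -> max_dist e1 x.1 y.1.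
Proof.
move=> /forallP max_xy le21; apply/forallP => w1; apply/implyP => xw1.
have := implyP (max_xy (w1, x.2)); rewrite /strong_prod /= xw1 eqxx orbT => /(_ isT).
by rewrite !dist_strong_prod /= (distC s2 c2 y.2); lia.
Qed.

Lemma max_dist_strong_prod_r x y : max_dist p x y ->
  dist e1 x.1 y.1 <= dist e2 x.2 y.2 -> max_dist e2 x.2 y.2.
Proof.
move=> /forallP max_xy le12; apply/forallP => w2; apply/implyP => xw2.
have := implyP (max_xy (x.1, w2)); rewrite /strong_prod /= xw2 eqxx => /(_ isT).
by rewrite !dist_strong_prod /= (distC s1 c1 y.1); lia.
Qed.

Lemma strong_resolving_strong_prod x y : strong_resolving p x y ->
  cart_sum (strong_resolving e1) (strong_resolving e2) x y.
Proof.
case/andP=> [/andP[x_neq_y max_xy] max_yx].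
have := maxn_dist_gt0 x y; rewrite x_neq_y /cart_sum /strong_resolving.
have distCyx := (distC s1 c1 y.1, distC s2 c2 y.2).
case: (leqP (dist e2 x.2 y.2) (dist e1 x.1 y.1)) => [le21|lt12] pos.
  rewrite -(dist_gt0 c1) (max_dist_strong_prod_l max_xy le21).
  by rewrite (max_dist_strong_prod_l max_yx) ?distCyx //=; lia.
rewrite -(dist_gt0 c2) (max_dist_strong_prod_r max_xy) ?(ltnW lt12) //.
by rewrite (max_dist_strong_prod_r max_yx) ?distCyx ?(ltnW lt12) /= ?orbT //; lia.
Qed.
End StrongProductDistance.

Theorem theorem7 (T1 T2 : finType) (e1 : rel T1) (e2 : rel T2) :
  simple_graph e1 -> connected_graph e1 ->
  simple_graph e2 -> connected_graph e2 ->
  subgraph (strong_prod (strong_resolving e1) (strong_resolving e2))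
           (strong_resolving (strong_prod e1 e2)) /\
  subgraph (strong_resolving (strong_prod e1 e2))
           (cart_sum (strong_resolving e1) (strong_resolving e2)).
Proof.
move=> [_ s1] c1 [_ s2] c2; split=> x y xy; last exact: strong_resolving_strong_prod.
have yx : strong_prod (strong_resolving e1) (strong_resolving e2) y x.
  by rewrite strong_prod_sym //; apply: strong_resolving_sym.
have x_neq_y : x != y by apply: strong_prod_neq xy; apply: strong_resolving_irr.
by rewrite /strong_resolving x_neq_y !max_dist_sr_strong_prod.
Qed.
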